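(* The relation $\equiv_{\mathrm{lps}}$ on $\mathcal{A}^*$ is the smallest congruence on $\mathcal{A}^*$ containing $\mathcal{R}_{\mathrm{lps}}$, and the relation $\equiv_{\mathrm{rps}}$ on $\mathcal{A}^*$ is the smallest congruence on $\mathcal{A}^*$ containing $\mathcal{R}_{\mathrm{rps}}$.
   Context: Let $\mathcal{A}=\{1<2<3<\cdots\}$ be the positive integers viewed as a totally ordered alphabet. An lPS tableau is a finite (possibly empty) sequence of nonempty bottom-justified columns of boxes filled with elements of $\mathcal{A}$, such that the entries of each column are strictly decreasing from top to bottom and the bottom entries of the columns form a weakly increasing sequence from left to right. An rPS tableau is defined in the same way but with columns weakly decreasing from top to bottom and the bottom row strictly increasing from left to right. Right insertion of a symbol $a$ into an lPS tableau $B$: if $a$ is greater than or equal to every entry of the bottom row, append a new column consisting of $a$ at the right end; otherwise, let $z$ be the leftmost bottom-row entry with $z>a$ and put $a$ in a new box at the bottom of the column of $z$ (the previous entries of that column move up one box). Right insertion into an rPS tableau is the same except that a new column is created iff $a$ is strictly greater than every bottom-row entry, and otherwise $z$ is the leftmost bottom-row entry with $z\geq a$. For a word $w=w_1\cdots w_k$, $\mathfrak{R}_\ell(w)$ (resp. $\mathfrak{R}_r(w)$) is obtained by starting with the empty lPS (resp. rPS) tableau and right-inserting $w_1,\dots,w_k$ in order. Define $u\equiv_{\mathrm{lps}}v\iff\mathfrak{R}_\ell(u)=\mathfrak{R}_\ell(v)$ and $u\equiv_{\mathrm{rps}}v\iff\mathfrak{R}_r(u)=\mathfrak{R}_r(v)$.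 $\mathcal{R}_{\mathrm{lps}}=\{(yux,yxu): m\geq1,\ x,y,u_1,\dots,u_m\in\mathcal{A},\ u=u_m\cdots u_1,\ x<y\leq u_1<\cdots<u_m\}$ and $\mathcal{R}_{\mathrm{rps}}=\{(yux,yxu): m\geq1,\ x,y,u_1,\dots,u_m\in\mathcal{A},\ u=u_m\cdots u_1,\ x\leq y<u_1\leq\cdots\leq u_m\}$. *)

From mathcomp Require Import all_boot.
Set Implicit Arguments. Unset Strict Implicit. Unset Printing Implicit Defensive.

Definition letter := {n : nat | 0 < n}.
Definition word := seq letter.
Definition ltA (a b : letter) : bool := val a < val b.
Definition leA (a b : letter) : bool := val a <= val b.

(* A PS tableau: a sequence of columns (left to right); each column is a
   nonempty sequence of letters listed from TOP to BOTTOM, so the bottom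
   entry of a column c is its last element. *)
Definition column := seq letter.
Definition tableau := seq column.
Definition bottom (c : column) (d : letter) : letter := last d c.

Fixpoint ins_l (a : letter) (B : tableau) : tableau :=
  match B with
  | [::] => [:: [:: a]]
  | c :: B' => if ltA a (bottom c a) then rcons c a :: B' else c :: ins_l a B'
  end.

Fixpoint ins_r (a : letter) (B : tableau) : tableau :=
  match B with
  | [::] => [:: [:: a]]
  | c :: B' => if leA a (bottom c a) then rcons c a :: B' else c :: ins_r a B'
  end.

Definition Rl (w : word) : tableau := foldl (fun B a => ins_l a B) [::] w.
Definition Rr (w : word) : tableau := foldl (fun B a => ins_r a B) [::] w.

Definition lps_equiv (u v : word) : Prop := Rl u = Rl v.
Definition rps_equiv (u v : word) : Prop := Rr u = Rr v.

(* The defining relations.  us = [:: u_1; ...; u_m], and u = u_m ... u_1 = rev us. *)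
Definition R_lps (p q : word) : Prop :=
  exists (x y : letter) (us : seq letter),
    [/\ us != [::],
        sorted ltA us,
        ltA x y && leA y (head y us),
        p = y :: rev us ++ [:: x]
      & q = [:: y; x] ++ rev us].

Definition R_rps (p q : word) : Prop :=
  exists (x y : letter) (us : seq letter),
    [/\ us != [::],
        sorted leA us,
        leA x y && ltA y (head y us),
        p = y :: rev us ++ [:: x]
      & q = [:: y; x] ++ rev us].

Definition is_congruence (C : word -> word -> Prop) : Prop :=
  [/\ forall u, C u u,
      forall u v, C u v -> C v u,
      forall u v w, C u v -> C v w -> C u w
    & forall u v s t, C u v -> C s t -> C (u ++ s) (v ++ t)].

Definition cong_closure (R : word -> word -> Prop) (u v : word) : Prop :=
  forall C, is_congruence C -> (forall p q, R p q -> C p q) -> C u v.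

From mathcomp Require Import all_boot zify.

Set Implicit Arguments. Unset Strict Implicit. Unset Printing Implicit Defensive.

(* Both insertions are instances of one insertion driven by a relation [s]
   (< for lPS, <= for rPS) whose converse complement [w] orders bottom rows.
   A defining relation y u x = y x u holds in the tableau monoid because the
   letters of u, all w-above y, only ever enter columns to the right of those
   receiving y and x, so x may be inserted before or after them.  Conversely
   every word is congruent to the column reading of its tableau: inserting a
   letter that lands at the bottom of column j moves it leftwards past the
   columns right of j, one defining relation per column, with y the bottom
   entry of the column on its left. *)

Section CongruenceClosure.
Variable R : word -> word -> Prop.

Lemma sub_cong_closure u v : R u v -> cong_closure R u v.
Proof. by move=> Ruv C _; apply. Qed.

Lemma cong_closure_refl u : cong_closure R u u.
Proof. by move=> C [refl _ _ _] _; apply: refl. Qed.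

Lemma cong_closure_sym u v : cong_closure R u v -> cong_closure R v u.
Proof. by move=> Huv C congC HR; case: (congC) => _ sym _ _; apply: sym (Huv C _ HR). Qed.

Lemma cong_closure_trans u v t :
  cong_closure R u v -> cong_closure R v t -> cong_closure R u t.
Proof.
move=> Huv Hvt C congC HR; case: (congC) => _ _ trans _.
exact: trans (Huv C _ HR) (Hvt C _ HR).
Qed.

Lemma cong_closure_cat u v p q :
  cong_closure R u v -> cong_closure R p q -> cong_closure R (u ++ p) (v ++ q).
Proof.
move=> Huv Hpq C congC HR; case: (congC) => _ _ _ cat.
exact: cat (Huv C _ HR) (Hpq C _ HR).
Qed.

Lemma cong_closure_catl p u v :
  cong_closure R u v -> cong_closure R (p ++ u) (p ++ v).
Proof. exact: cong_closure_cat (cong_closure_refl p). Qed.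

End CongruenceClosure.

Definition letter1 : letter := exist _ 1 isT.

Section PSInsertion.
Variables s w : rel letter.

Fixpoint ins_ps (a : letter) (B : tableau) : tableau :=
  match B with
  | [::] => [:: [:: a]]
  | c :: B' => if s a (bottom c a) then rcons c a :: B' else c :: ins_ps a B'
  end.

Definition ins_word (B : tableau) (u : word) : tableau :=
  foldl (fun B a => ins_ps a B) B u.

Definition R_ps (p q : word) : Prop :=
  exists (x y : letter) (us : seq letter),
    [/\ us != [::], sorted s us, s x y && w y (head y us),
        p = y :: rev us ++ [:: x] & q = [:: y; x] ++ rev us].

Definition ps_column (c : column) : bool := (c != [::]) && sorted s (rev c).

(* The default [letter1] is never reached on columns satisfying [ps_column]. *)
Definition bottom_row (B : tableau) : seq letter := [seq bottom c letter1 | c <- B].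

Definition ps_tableau (B : tableau) : bool :=
  all ps_column B && sorted w (bottom_row B).

Hypothesis sNw : forall a b, ~~ s a b = w b a.
Hypothesis sw_s : forall a b c, s a b -> w b c -> s a c.
Hypothesis sw_w : forall a b c, s a b -> w b c -> w a c.
Hypothesis ws_w : forall a b c, w a b -> s b c -> w a c.
Hypothesis w_trans : forall a b c, w a b -> w b c -> w a c.

Lemma ins_word_cat B u v : ins_word B (u ++ v) = ins_word (ins_word B u) v.
Proof. exact: foldl_cat. Qed.

Lemma ins_word_skip c0 c B u : all (fun a => ~~ s a (last c0 c)) u ->
  ins_word ((c0 :: c) :: B) u = (c0 :: c) :: ins_word B u.
Proof. by elim: u B => //= a u IH B /andP[/negbTE sab Hu]; rewrite /bottom /= sab IH. Qed.

Lemma ins_word_commute B x y u : all ps_column B -> s x y -> all (w y) u ->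
  ins_word B (y :: u ++ [:: x]) = ins_word B (y :: x :: u).
Proof.
move=> psB sxy wyu.
have skip_y : all (fun a => ~~ s a y) u by apply: sub_all wyu => a; rewrite sNw.
have skip_x : all (fun a => ~~ s a x) u.
  by apply: sub_all wyu => a wya; rewrite sNw (sw_w sxy wya).
elim: B psB => [_|[|c0 c] B IH] //=.
  by rewrite ins_word_cat ins_word_skip //= /bottom /= sxy ins_word_skip.
case/andP=> _ psB; rewrite /bottom /=.
case: ifP => syb.
  rewrite ins_word_cat ins_word_skip ?last_rcons //=.
  by rewrite /bottom /= last_rcons sxy ins_word_skip // last_rcons.
have skip_b : all (fun a => ~~ s a (last c0 c)) u.
  by apply: sub_all wyu => a wya; rewrite sNw (w_trans _ wya) // -sNw syb.
rewrite ins_word_cat ins_word_skip //= /bottom /=.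
case: ifP => sxb; first by rewrite ins_word_skip // last_rcons.
by rewrite ins_word_skip //; have /= := IH psB; rewrite ins_word_cat /= => ->.
Qed.

Lemma ps_column_ins a B : all ps_column B -> all ps_column (ins_ps a B).
Proof.
elim: B => [|[|c0 c] B IH] //= /andP[/andP[_ cs] psB].
rewrite /bottom /=; case: ifP => sab /=; last by rewrite /ps_column cs IH.
rewrite psB andbT /ps_column -rcons_cons rev_rcons /=.
by move: cs; rewrite (lastI c0 c) rev_rcons /= sab.
Qed.

Lemma ps_column_ins_word B u : all ps_column B -> all ps_column (ins_word B u).
Proof. by elim: u B => //= a u IH B psB; apply/IH/ps_column_ins. Qed.

Definition ins_equiv (u v : word) : Prop :=
  forall B, all ps_column B -> ins_word B u = ins_word B v.

Lemma ins_equiv_congruence : is_congruence ins_equiv.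
Proof.
split=> [u B _ // | u v Huv B psB | u v t Huv Hvt B psB | u v p q Huv Hpq B psB].
- by rewrite Huv.
- by rewrite Huv // Hvt.
- by rewrite !ins_word_cat Huv // Hpq // ps_column_ins_word.
Qed.

Lemma path_s_all_w y x l : w y x -> path s x l -> all (w y) (x :: l).
Proof.
elim: l x => [|z l IH] x wyx /=; first by rewrite wyx.
by case/andP=> sxz pl; rewrite wyx; apply: IH (ws_w wyx sxz) pl.
Qed.

Lemma R_ps_ins_equiv p q : R_ps p q -> ins_equiv p q.
Proof.
case=> x [y [[|u1 us] [//= _ sus /andP[sxy wyu] -> ->]]] B psB.
by rewrite ins_word_commute // all_rev path_s_all_w.
Qed.

Lemma cong_closure_ins_word u v :
  cong_closure R_ps u v -> ins_word [::] u = ins_word [::] v.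
Proof. by move=> Huv; apply: (Huv _ ins_equiv_congruence R_ps_ins_equiv). Qed.

Lemma path_s_w a b l : s a b -> path w b l -> path w a l.
Proof. by case: l => //= c l sab /andP[wbc ->]; rewrite (sw_w sab wbc). Qed.

Lemma path_bottom_row_ins p a B : all ps_column B ->
  path w p (bottom_row B) -> w p a -> path w p (bottom_row (ins_ps a B)).
Proof.
elim: B p => [|[|c0 c] B IH] p //=; first by move=> _ _ ->.
case/andP=> _ psB; rewrite /bottom /=; case/andP=> wpb pB wpa.
case: ifP => sab /=; last by rewrite wpb IH // -sNw sab.
by rewrite /bottom last_rcons wpa (path_s_w sab).
Qed.

Lemma ps_tableau_ins a B : ps_tableau B -> ps_tableau (ins_ps a B).
Proof.
case/andP=> psB sB; rewrite /ps_tableau ps_column_ins //=.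
case: B psB sB => [|[|c0 c] B] //= /andP[_ psB]; rewrite /bottom /=.
case: ifP => sab /=; last by move=> pB; rewrite path_bottom_row_ins // -sNw sab.
by rewrite /bottom last_rcons; apply: path_s_w.
Qed.

Lemma ps_tableau_ins_word u : ps_tableau (ins_word [::] u).
Proof.
elim/last_ind: u => [|u a IH] //.
by rewrite -cats1 ins_word_cat ps_tableau_ins.
Qed.

Lemma cong_closure_bubble B y a : s a y -> all ps_column B ->
  path w y (bottom_row B) ->
  cong_closure R_ps (y :: flatten B ++ [:: a]) (y :: a :: flatten B).
Proof.
elim: B y => [|[|c0 c] B IH] y say //=; first by move=> *; apply: cong_closure_refl.
case/andP=> /andP[_ cs] psB; rewrite /bottom /=; case/andP=> wyb pB.
have IHb := cong_closure_catl (y :: belast c0 c) (IH _ (sw_s say wyb) psB pB).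
set b := last c0 c in wyb IHb *; set bl := belast c0 c in IHb *.
have col : c0 :: c = rcons bl b := lastI c0 c.
have -> : [:: y, c0 & (c ++ flatten B) ++ [:: a]] = (y :: bl) ++ b :: flatten B ++ [:: a].
  by rewrite -catA -cat_cons col cat_rcons.
apply: cong_closure_trans IHb _.
have -> : (y :: bl) ++ [:: b, a & flatten B] = (y :: rcons bl b ++ [:: a]) ++ flatten B.
  by rewrite cat_rcons /= -catA.
have -> : [:: y, a, c0 & c ++ flatten B] = ([:: y; a] ++ rcons bl b) ++ flatten B.
  by rewrite -col.
apply: cong_closure_cat (sub_cong_closure _) (cong_closure_refl _).
exists a, y, (rev (rcons bl b)); rewrite revK rev_rcons; split=> //=.
  by move: cs; rewrite col rev_rcons.
by rewrite say wyb.
Qed.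

Lemma cong_closure_reading_ins a B : ps_tableau B ->
  cong_closure R_ps (flatten B ++ [:: a]) (flatten (ins_ps a B)).
Proof.
case/andP; elim: B => [|[|c0 c] B IH] //=; first by move=> *; apply: cong_closure_refl.
case/andP=> /andP[_ cs] psB; rewrite /bottom /= => pB.
have unfold_col X : c0 :: c ++ X = belast c0 c ++ last c0 c :: X.
  by rewrite -cat_cons lastI cat_rcons.
case: ifP => sab /=.
  rewrite -catA unfold_col -cats1 -catA /= unfold_col.
  exact: cong_closure_catl (cong_closure_bubble sab psB pB).
rewrite -catA -cat_cons; apply: cong_closure_catl.
exact: IH psB (path_sorted pB).
Qed.

Lemma cong_closure_reading u : cong_closure R_ps u (flatten (ins_word [::] u)).
Proof.
elim/last_ind: u => [|u a IH]; first exact: cong_closure_refl.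
rewrite -cats1 ins_word_cat /=.
apply: cong_closure_trans (cong_closure_cat IH (cong_closure_refl _)) _.
exact: cong_closure_reading_ins (ps_tableau_ins_word u).
Qed.

Lemma ins_word_eq_cong_closure u v :
  ins_word [::] u = ins_word [::] v <-> cong_closure R_ps u v.
Proof.
split; last exact: cong_closure_ins_word.
move=> Euv; apply: cong_closure_trans (cong_closure_reading u) _.
by rewrite Euv; apply: cong_closure_sym (cong_closure_reading v).
Qed.

End PSInsertion.

Lemma ins_l_ps a B : ins_l a B = ins_ps ltA a B.
Proof. by elim: B => //= c B ->. Qed.

Lemma ins_r_ps a B : ins_r a B = ins_ps leA a B.
Proof. by elim: B => //= c B ->. Qed.

Lemma Rl_ins_word u : Rl u = ins_word ltA [::] u.
Proof. by rewrite /Rl /ins_word; elim: u [::] => //= a u IH B; rewrite ins_l_ps IH. Qed.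

Lemma Rr_ins_word u : Rr u = ins_word leA [::] u.
Proof. by rewrite /Rr /ins_word; elim: u [::] => //= a u IH B; rewrite ins_r_ps IH. Qed.

Theorem theorem3p23 :
  (forall u v : word, lps_equiv u v <-> cong_closure R_lps u v) /\
  (forall u v : word, rps_equiv u v <-> cong_closure R_rps u v).
Proof.
split=> u v.
- rewrite /lps_equiv !Rl_ins_word; apply: ins_word_eq_cong_closure;
    rewrite /ltA /leA => *; lia.
- rewrite /rps_equiv !Rr_ins_word; apply: ins_word_eq_cong_closure;
    rewrite /ltA /leA => *; lia.
Qed.
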